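(* Let $f:\mathbb{R}^d\to\mathbb{R}$ be $\beta$-smooth with minimum value $f^\star$, and run AdaSGD (as defined in the context) for $T$ steps with parameters $\eta,\gamma>0$ using a stochastic gradient oracle with bounded affine noise with parameters $\sigma_0,\sigma_1\ge0$. Then, with $G_t=\sqrt{\gamma^2+\sum_{s=1}^t\|g_s\|^2}$, $$\sum_{t=1}^T\frac{\|g_t\|^2}{G_t^2}\le C_1:=\log\Big(1+\frac{2\sigma_0^2T+8(1+\sigma_1^2)(\eta^2\beta^2T^3+\beta\Delta_1T)}{\gamma^2}\Big),$$ where $\Delta_1=f(w_1)-f^\star$.
   Context: $\|\cdot\|$ is the Euclidean norm and $\log$ the base-2 logarithm. $\beta$-smooth: $\|\nabla f(x)-\nabla f(y)\|\le\beta\|x-y\|$. Oracle: queried at $w$, returns random $g(w)$ with $\mathbb{E}[g(w)\mid w]=\nabla f(w)$ and, with probability one, $\|g(w)-\nabla f(w)\|^2\le\sigma_0^2+\sigma_1^2\|\nabla f(w)\|^2$. AdaSGD: arbitrary $w_1$; for $t=1,\dots,T$, $g_t=g(w_t)$, $\eta_t=\eta/\sqrt{\gamma^2+\sum_{s=1}^t\|g_s\|^2}$, $w_{t+1}=w_t-\eta_tg_t$. *)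

From HB Require Import structures.
From mathcomp Require Import all_boot all_order all_algebra.
From mathcomp Require Import all_classical all_reals all_analysis.
Set Implicit Arguments. Unset Strict Implicit. Unset Printing Implicit Defensive.
Import Order.TTheory GRing.Theory Num.Theory.
Import numFieldNormedType.Exports.
Local Open Scope ring_scope.

(* Euclidean inner product and Euclidean norm on R^d = 'rV[R]_d
   (the library's canonical norm on matrices is the max-norm, so we
   define the Euclidean one explicitly). *)
Definition dotv {R : realType} {d : nat} (x y : 'rV[R]_d) : R :=
  \sum_(i < d) x ord0 i * y ord0 i.
Definition sqnorm {R : realType} {d : nat} (x : 'rV[R]_d) : R := dotv x x.
Definition enorm {R : realType} {d : nat} (x : 'rV[R]_d) : R := Num.sqrt (sqnorm x).

Definition log2 {R : realType} (x : R) : R := ln x / ln 2.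

Definition is_gradient {R : realType} {d : nat}
  (f : 'rV[R]_d -> R) (gradf : 'rV[R]_d -> 'rV[R]_d) : Prop :=
  forall x, differentiable f x /\ forall h, 'd f x h = dotv (gradf x) h.

Definition smooth {R : realType} {d : nat} (beta : R)
  (gradf : 'rV[R]_d -> 'rV[R]_d) : Prop :=
  forall x y, enorm (gradf x - gradf y) <= beta * enorm (x - y).

Definition Gacc {R : realType} {d : nat} (gamma : R) (g : nat -> 'rV[R]_d)
  (t : nat) : R :=
  Num.sqrt (gamma ^+ 2 + \sum_(1 <= s < t.+1) enorm (g s) ^+ 2).

(* Each AdaSGD step has length [eta ‖g_t‖ / G_t <= eta], so every iterate up
   to time T lies within [eta T] of [w_1].  The descent lemma gives
   [‖∇f x‖² <= 2 beta (f x - fstar)]; together with smoothness this yields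
   [‖∇f (w_t)‖² <= 4 (eta² beta² T² + beta Δ_1)], and the noise condition
   turns it into [‖g_t‖² <= 2 sigma0² + 8 (1 + sigma1²)(eta² beta² T² + beta Δ_1)].
   Finally [a / (B + a) <= ln (B + a) - ln B] telescopes to
   [Σ_t a_t / (γ² + a_1 + ... + a_t) <= ln (1 + Σ_t a_t / γ²)], and [ln <= log2]
   on [[1, +oo)]. *)
From HB Require Import structures.
From mathcomp Require Import all_boot all_order all_algebra.
From mathcomp Require Import all_classical all_reals all_analysis.
From mathcomp Require Import ring lra.
Import Order.TTheory GRing.Theory Num.Theory.
Import numFieldNormedType.Exports.
Set Implicit Arguments. Unset Strict Implicit.
Local Open Scope ring_scope.

Section EuclideanNorm.
Variables (R : realType) (d : nat).
Implicit Types (x y z : 'rV[R]_d) (c : R).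

Lemma dotvC x y : dotv x y = dotv y x.
Proof. by apply: eq_bigr => i _; rewrite mulrC. Qed.

Lemma dotvDl x y z : dotv (x + y) z = dotv x z + dotv y z.
Proof. by rewrite /dotv -big_split; apply: eq_bigr => i _; rewrite !mxE mulrDl. Qed.

Lemma dotvBl x y z : dotv (x - y) z = dotv x z - dotv y z.
Proof. by rewrite /dotv -sumrB; apply: eq_bigr => i _; rewrite !mxE mulrBl. Qed.

Lemma dotvZl c x y : dotv (c *: x) y = c * dotv x y.
Proof. by rewrite /dotv mulr_sumr; apply: eq_bigr => i _; rewrite !mxE mulrA. Qed.

Lemma sqnorm_ge0 x : 0 <= sqnorm x.
Proof. by apply: sumr_ge0 => i _; rewrite -expr2 sqr_ge0. Qed.

Lemma sqnorm0 : sqnorm (0 : 'rV[R]_d) = 0.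
Proof. by apply: big1 => i _; rewrite mxE mul0r. Qed.

Lemma sqnorm0_eq0 x : sqnorm x = 0 -> x = 0.
Proof.
move=> x0; apply/matrixP => i j; rewrite (ord1 i) mxE.
have xx0 := psumr_eq0P (fun k _ => sqr_ge0 (x ord0 k)) x0.
by apply/eqP; rewrite -sqrf_eq0 xx0.
Qed.

Lemma sqnormZ c x : sqnorm (c *: x) = c ^+ 2 * sqnorm x.
Proof. by rewrite /sqnorm dotvZl dotvC dotvZl mulrA expr2. Qed.

Lemma sqnormD x y : sqnorm (x + y) = sqnorm x + 2 * dotv x y + sqnorm y.
Proof. by rewrite /sqnorm dotvDl !(dotvC _ (x + y)) !dotvDl (dotvC y x); ring. Qed.

(* Lagrange's identity: the defect in Cauchy–Schwarz is half a sum of squares. *)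
Lemma sqr_dotv_le x y : dotv x y ^+ 2 <= sqnorm x * sqnorm y.
Proof.
set a := fun i => x ord0 i; set b := fun i => y ord0 i.
have sum_mul (u v : 'I_d -> R) :
    \sum_i \sum_j u i * v j = (\sum_i u i) * (\sum_j v j).
  by rewrite mulr_suml; apply: eq_bigr => i _; rewrite mulr_sumr.
have lagrange : \sum_i \sum_j (a i * b j - a j * b i) ^+ 2
              = 2 * (sqnorm x * sqnorm y - dotv x y ^+ 2).
  transitivity (\sum_i \sum_j (a i * a i) * (b j * b j)
              + \sum_i \sum_j (b i * b i) * (a j * a j)
              - 2 * \sum_i \sum_j (a i * b i) * (a j * b j)).
    rewrite mulr_sumr -big_split -sumrB; apply: eq_bigr => i _.
    by rewrite mulr_sumr -big_split -sumrB; apply: eq_bigr => j _ /=; ring.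
  by rewrite !sum_mul /sqnorm /dotv -/a -/b; ring.
have : 0 <= \sum_i \sum_j (a i * b j - a j * b i) ^+ 2.
  by apply: sumr_ge0 => i _; apply: sumr_ge0 => j _; apply: sqr_ge0.
by rewrite lagrange pmulr_rge0 // subr_ge0.
Qed.

Lemma enorm_ge0 x : 0 <= enorm x.
Proof. exact: sqrtr_ge0. Qed.

Lemma enorm0 : enorm (0 : 'rV[R]_d) = 0.
Proof. by rewrite /enorm sqnorm0 sqrtr0. Qed.

Lemma sqr_enorm x : enorm x ^+ 2 = sqnorm x.
Proof. by rewrite sqr_sqrtr // sqnorm_ge0. Qed.

Lemma enormZ c x : enorm (c *: x) = `|c| * enorm x.
Proof. by rewrite /enorm sqnormZ sqrtrM ?sqr_ge0 // sqrtr_sqr. Qed.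

Lemma dotv_le_enorm x y : dotv x y <= enorm x * enorm y.
Proof.
apply: le_trans (ler_norm _) _.
rewrite -sqrtr_sqr -sqrtrM ?sqnorm_ge0 //.
exact/ler_wsqrtr/sqr_dotv_le.
Qed.

Lemma sqnormD_le x y : sqnorm (x + y) <= 2 * sqnorm x + 2 * sqnorm y.
Proof.
rewrite sqnormD -!sqr_enorm.
have := dotv_le_enorm x y; have := sqr_ge0 (enorm x - enorm y); nra.
Qed.

Lemma enormD_le x y : enorm (x + y) <= enorm x + enorm y.
Proof.
rewrite -(ler_pXn2r (n := 2)) ?nnegrE ?addr_ge0 ?enorm_ge0 //.
rewrite sqr_enorm sqnormD sqrrD !sqr_enorm lerD2r lerD2l.
by rewrite -mulr_natl; have := dotv_le_enorm x y; lra.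
Qed.

End EuclideanNorm.

Lemma enorm_telescope_le (R : realType) (d : nat) (w : nat -> 'rV[R]_d) (c : R) n :
  (forall t, (1 <= t <= n)%N -> enorm (w t.+1 - w t) <= c) ->
  enorm (w n.+1 - w 1%N) <= c * n%:R.
Proof.
elim: n => [|n IHn] step; first by rewrite subrr enorm0 mulr0.
have -> : w n.+2 - w 1%N = (w n.+1 - w 1%N) + (w n.+2 - w n.+1).
  by rewrite [RHS]addrC addrA subrK.
rewrite -natr1 mulrDr mulr1.
apply: le_trans (enormD_le _ _) (lerD (IHn _) (step _ _)); last first.
  by rewrite /= ltnS leqnn.
by move=> t /andP[t1 tn]; apply: step; rewrite t1 (leq_trans tn).
Qed.

(* [sup_t (t G - b/2 t² G) = G / (2 b)], attained at [t = 1/b]. *)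
Lemma le_mul2_of_quadratic_bound (R : realFieldType) (b G D : R) :
  0 <= b -> 0 <= G -> (forall t, t * G - b / 2 * (t ^+ 2 * G) <= D) ->
  G <= 2 * b * D.
Proof.
move=> b_ge0 G_ge0.
have [->|b_neq0] := eqVneq b 0 => bound.
  have [->|G_neq0] := eqVneq G 0; first by rewrite mulr0 mul0r.
  by have := bound ((D + 1) / G); rewrite divfK // !mul0r subr0; lra.
have b_gt0 : 0 < b by rewrite lt0r b_neq0.
have := bound b^-1.
rewrite (_ : _ - _ = G / (2 * b)); last by field.
by rewrite ler_pdivrMr ?mulr_gt0 // mulrC.
Qed.

Section Smoothness.
Variables (R : realType) (d : nat) (f : 'rV[R]_d -> R) (gradf : 'rV[R]_d -> 'rV[R]_d).
Variable beta : R.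
Hypothesis f_grad : is_gradient f gradf.
Hypothesis f_smooth : smooth beta gradf.

Lemma smooth_lt0_eq0 : beta < 0 -> forall v : 'rV[R]_d, v = 0.
Proof.
move=> beta_lt0 v; apply/sqnorm0_eq0; rewrite -sqr_enorm.
have := f_smooth v 0; rewrite subr0.
have := enorm_ge0 (gradf v - gradf 0); have := enorm_ge0 v.
by move=> v_ge0 dv_ge0 lip; rewrite (_ : enorm v = 0) ?expr0n //; nra.
Qed.

Lemma is_derive_line (x h : 'rV[R]_d) (s : R) :
  is_derive s 1 (fun s : R => f (s *: h + x)) (dotv (gradf (s *: h + x)) h).
Proof.
have shiftE :
    (fun t : R => t^-1 *: (((fun s => f (s *: h + x)) \o shift s) (t *: 1)
                          - f (s *: h + x)))
  = (fun t : R => t^-1 *: ((f \o shift (s *: h + x)) (t *: h) - f (s *: h + x))).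
  by apply/funext => t /=; rewrite [t *: 1]mulr1 scalerDl addrA.
have [df dfE] := f_grad (s *: h + x).
apply: DeriveDef; first by rewrite /derivable shiftE; exact: diff_derivable.
transitivity ('D_h f (s *: h + x)); first by rewrite /derive shiftE.
by rewrite deriveE // dfE.
Qed.

(* No sign condition on [beta] is needed here. *)
Lemma descent (x h : 'rV[R]_d) :
  f (h + x) <= f x + dotv (gradf x) h + beta / 2 * sqnorm h.
Proof.
set c0 := dotv (gradf x) h; set k := beta / 2 * sqnorm h.
pose psi s := f (s *: h + x) - s * c0 - k * (s * s).
pose dpsi s := dotv (gradf (s *: h + x)) h - c0 - k * (s + s).
have psi_derive (s : R) : is_derive s 1 psi (dpsi s).
  have lin : is_derive s 1 (fun s : R => s * c0) c0.
    have := is_deriveM (is_derive_id s (1 : R)) (is_derive_cst c0 s (1 : R)).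
    move/is_derive_eq; apply.
    by rewrite /= scaler0 add0r [_ *: 1]mulr1.
  have quad : is_derive s 1 (fun s : R => k * (s * s)) (k * (s + s)).
    have := is_deriveZ k (is_deriveM (is_derive_id s (1 : R)) (is_derive_id s (1 : R))).
    move/is_derive_eq; apply.
    by rewrite /= [s%:A]mulr1.
  exact: is_deriveB (is_deriveB (is_derive_line x h s) lin) quad.
have [c] : exists2 c, c \in `]0, 1[ & psi 1 - psi 0 = dpsi c * (1 - 0).
  apply: MVT ltr01 (fun s _ => psi_derive s) _.
  by apply: derivable_within_continuous => s _; exact: ex_derive.
rewrite in_itv /= => /andP[c_gt0 c_lt1].
rewrite /psi /dpsi scale1r scale0r add0r subr0 mulr1 !mul0r !mulr0 !subr0 -dotvBl.
have := dotv_le_enorm (gradf (c *: h + x) - gradf x) h.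
have := f_smooth (c *: h + x) x; rewrite addrK enormZ gtr0_norm //.
have := enorm_ge0 h; have := enorm_ge0 (gradf (c *: h + x) - gradf x).
rewrite /k -sqr_enorm; nra.
Qed.

Lemma sqnorm_grad_le (fstar : R) : 0 <= beta -> (forall x, fstar <= f x) ->
  forall x, sqnorm (gradf x) <= 2 * beta * (f x - fstar).
Proof.
move=> beta_ge0 f_ge x; apply: le_mul2_of_quadratic_bound (sqnorm_ge0 _) _ => //.
move=> t; have := le_trans (f_ge _) (descent x (- t *: gradf x)).
by rewrite sqnormZ sqrrN dotvC dotvZl mulNr -/(sqnorm _); lra.
Qed.

End Smoothness.

Section Accumulator.
Variables (R : realType) (d : nat) (gamma : R) (g : nat -> 'rV[R]_d).

Lemma sqr_Gacc t :
  Gacc gamma g t ^+ 2 = gamma ^+ 2 + \sum_(1 <= s < t.+1) enorm (g s) ^+ 2.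
Proof. by rewrite sqr_sqrtr // addr_ge0 ?sqr_ge0 ?sumr_ge0 // => s _; apply: sqr_ge0. Qed.

Lemma Gacc_gt0 t : gamma != 0 -> 0 < Gacc gamma g t.
Proof.
move=> gamma_neq0; rewrite sqrtr_gt0 ltr_pwDl ?sumr_ge0 //.
- by rewrite lt0r sqrf_eq0 gamma_neq0 sqr_ge0.
- by move=> s _; apply: sqr_ge0.
Qed.

Lemma enorm_le_Gacc t : (0 < t)%N -> enorm (g t) <= Gacc gamma g t.
Proof.
case: t => // t _; rewrite -(ler_pXn2r (n := 2)) ?nnegrE ?enorm_ge0 ?sqrtr_ge0 //.
rewrite sqr_Gacc big_nat_recr //= addrA lerDr addr_ge0 ?sqr_ge0 ?sumr_ge0 //.
by move=> s _; apply: sqr_ge0.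
Qed.

End Accumulator.

Section Logarithm.
Variable R : realType.

(* [ln (1 - u) <= - u] with [u = a / (B + a)]. *)
Lemma div_le_lnB (B a : R) : 0 < B -> 0 <= a -> a / (B + a) <= ln (B + a) - ln B.
Proof.
move=> B_gt0 a_ge0; have Ba_gt0 : 0 < B + a by lra.
have u_gtN1 : -1 < - (a / (B + a)) by rewrite ltrNl opprK ltr_pdivrMr //; lra.
have := le_ln1Dx u_gtN1.
rewrite (_ : 1 - _ = B / (B + a)); last by field; rewrite gt_eqF.
by rewrite ln_div ?posrE //; lra.
Qed.

Lemma sum_div_cumsum_le_ln (a : nat -> R) (c : R) n : 0 < c -> (forall t, 0 <= a t) ->
  \sum_(1 <= t < n.+1) a t / (c + \sum_(1 <= s < t.+1) a s)
    <= ln (1 + (\sum_(1 <= t < n.+1) a t) / c).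
Proof.
move=> c_gt0 a_ge0.
rewrite -[1](divff (lt0r_neq0 c_gt0)) -mulrDl ln_div ?posrE ?ltr_pwDl ?sumr_ge0 //.
elim: n => [|n IHn]; first by rewrite !big_geq // addr0 subrr.
rewrite big_nat_recr //= [\sum_(1 <= s < n.+2) a s]big_nat_recr //= addrA.
have S_gt0 : 0 < c + \sum_(1 <= s < n.+1) a s by rewrite ltr_pwDl ?sumr_ge0.
by have := div_le_lnB S_gt0 (a_ge0 n.+1); lra.
Qed.

Lemma ln_le_log2 (x : R) : 1 <= x -> ln x <= log2 x.
Proof.
move=> x_ge1; have ln2_gt0 : 0 < ln (2 : R) by rewrite ln_gt0 // ltr1n.
have ln2_le1 : ln (2 : R) <= 1 by have := @le_ln1Dx R 1 ltac:(lra).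
by rewrite /log2 ler_pdivlMr // -[leRHS]mulr1 ler_wpM2l ?ln_ge0.
Qed.

End Logarithm.

Section AdaSGD.
Variables (R : realType) (d : nat).
Variables (f : 'rV[R]_d -> R) (gradf : 'rV[R]_d -> 'rV[R]_d) (beta fstar : R).
Variables (eta gamma sigma0 sigma1 : R) (T : nat) (w g : nat -> 'rV[R]_d).
Hypothesis f_grad : is_gradient f gradf.
Hypothesis f_smooth : smooth beta gradf.
Hypothesis fstar_attained : exists wstar, f wstar = fstar.
Hypothesis fstar_le : forall x, fstar <= f x.
Hypothesis eta_ge0 : 0 <= eta.
Hypothesis gamma_neq0 : gamma != 0.
Hypothesis oracle_noise : forall t, (1 <= t <= T)%N ->
  enorm (g t - gradf (w t)) ^+ 2 <= sigma0 ^+ 2 + sigma1 ^+ 2 * enorm (gradf (w t)) ^+ 2.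
Hypothesis adasgd_update : forall t, (1 <= t <= T)%N ->
  w t.+1 = w t - (eta / Gacc gamma g t) *: g t.

Lemma adasgd_step_le t : (1 <= t <= T)%N -> enorm (w t.+1 - w t) <= eta.
Proof.
move=> tT; have G_gt0 := Gacc_gt0 g t gamma_neq0.
rewrite adasgd_update // addrAC subrr add0r -scaleNr enormZ normrN.
rewrite ger0_norm; last by rewrite divr_ge0 // ltW.
rewrite mulrAC ler_pdivrMr //; apply: ler_wpM2l => //.
by apply: enorm_le_Gacc; case/andP: tT.
Qed.

Lemma adasgd_drift_le t : (1 <= t <= T)%N -> enorm (w t - w 1%N) <= eta * T%:R.
Proof.
case: t => // k /andP[_ kT].
have steps s : (1 <= s <= k)%N -> enorm (w s.+1 - w s) <= eta.
  by case/andP=> s_gt0 sk; apply: adasgd_step_le; rewrite s_gt0 (leq_trans sk (ltnW kT)).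
apply: le_trans (enorm_telescope_le steps) _.
by apply: ler_wpM2l => //; rewrite ler_nat ltnW.
Qed.

Lemma sqnorm_grad_iterate_le t : 0 <= beta -> (1 <= t <= T)%N ->
  sqnorm (gradf (w t))
    <= 4 * (eta ^+ 2 * beta ^+ 2 * T%:R ^+ 2 + beta * (f (w 1%N) - fstar)).
Proof.
move=> beta_ge0 tT.
have lip : enorm (gradf (w t) - gradf (w 1%N)) <= beta * (eta * T%:R).
  apply: le_trans (f_smooth _ _) _.
  by apply: ler_wpM2l => //; apply: adasgd_drift_le.
have lip2 : sqnorm (gradf (w t) - gradf (w 1%N)) <= eta ^+ 2 * beta ^+ 2 * T%:R ^+ 2.
  rewrite -sqr_enorm (_ : eta ^+ 2 * _ * _ = (beta * (eta * T%:R)) ^+ 2); last by ring.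
  by rewrite ler_pXn2r ?nnegrE ?enorm_ge0 ?(le_trans (enorm_ge0 _) lip).
have := sqnormD_le (gradf (w 1%N)) (gradf (w t) - gradf (w 1%N)); rewrite addrC subrK.
have := sqnorm_grad_le f_grad f_smooth beta_ge0 fstar_le (w 1%N).
have := sqr_ge0 (eta * beta * T%:R); rewrite !exprMn.
by move: lip2; set M := eta ^+ 2 * _ * _; set X := f (w 1%N) - fstar; lra.
Qed.

Lemma sqr_enorm_oracle_le t : (1 <= t <= T)%N ->
  enorm (g t) ^+ 2 <= 2 * sigma0 ^+ 2 + 8 * (1 + sigma1 ^+ 2)
    * (eta ^+ 2 * beta ^+ 2 * T%:R ^+ 2 + beta * (f (w 1%N) - fstar)).
Proof.
move=> tT; have [beta_lt0|beta_ge0] := ltP beta 0.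
  have trivial := smooth_lt0_eq0 f_smooth beta_lt0.
  have [wstar <-] := fstar_attained.
  rewrite (trivial (g t)) enorm0 (trivial (w 1%N)) -(trivial wstar) subrr mulr0 addr0.
  rewrite expr0n /= -!exprMn.
  have := sqr_ge0 sigma0; have := sqr_ge0 sigma1; have := sqr_ge0 (eta * beta * T%:R).
  by nra.
have noise := oracle_noise tT; rewrite !sqr_enorm in noise.
have grad := sqnorm_grad_iterate_le beta_ge0 tT.
have := sqnormD_le (g t - gradf (w t)) (gradf (w t)); rewrite subrK -sqr_enorm.
have := sqr_ge0 sigma1; move: noise grad.
set E := sqnorm (gradf (w t)); set M := (_ + beta * _); nra.
Qed.

End AdaSGD.

Theorem lemma6 (R : realType) (d : nat)
  (f : 'rV[R]_d -> R) (gradf : 'rV[R]_d -> 'rV[R]_d) (beta fstar : R)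
  (eta gamma sigma0 sigma1 : R) (T : nat)
  (w g : nat -> 'rV[R]_d) :
  is_gradient f gradf ->
  smooth beta gradf ->
  (exists wstar, f wstar = fstar) ->
  (forall x, fstar <= f x) ->
  0 < eta -> 0 < gamma -> 0 <= sigma0 -> 0 <= sigma1 ->
  (forall t, (1 <= t <= T)%N ->
     enorm (g t - gradf (w t)) ^+ 2
       <= sigma0 ^+ 2 + sigma1 ^+ 2 * enorm (gradf (w t)) ^+ 2) ->
  (forall t, (1 <= t <= T)%N ->
     w t.+1 = w t - (eta / Gacc gamma g t) *: g t) ->
  \sum_(1 <= t < T.+1) enorm (g t) ^+ 2 / Gacc gamma g t ^+ 2
    <= log2 (1 + (2 * sigma0 ^+ 2 * T%:R
                  + 8 * (1 + sigma1 ^+ 2)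
                      * (eta ^+ 2 * beta ^+ 2 * T%:R ^+ 3
                         + beta * (f (w 1%N) - fstar) * T%:R))
                 / gamma ^+ 2).
Proof.
move=> f_grad f_smooth fstar_attained fstar_le eta_gt0 gamma_gt0 _ _ noise update.
have oracle_le := sqr_enorm_oracle_le f_grad f_smooth fstar_attained fstar_le
  (ltW eta_gt0) (lt0r_neq0 gamma_gt0) noise update.
set K := 2 * sigma0 ^+ 2 + _ in oracle_le.
set A := \sum_(1 <= t < T.+1) enorm (g t) ^+ 2.
have A_ge0 : 0 <= A by apply: sumr_ge0 => t _; apply: sqr_ge0.
have A_le : A <= K * T%:R.
  have -> : K * T%:R = \sum_(1 <= t < T.+1) K by rewrite sumr_const_nat subn1 mulr_natr.
  by rewrite /A !big_nat; apply: ler_sum => t; apply: oracle_le.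
have gamma2_gt0 : 0 < gamma ^+ 2 by rewrite exprn_gt0.
rewrite (_ : 2 * sigma0 ^+ 2 * T%:R + _ = K * T%:R); last by rewrite /K; ring.
have KT_ge0 := le_trans A_ge0 A_le.
apply: le_trans (ln_le_log2 _); last by rewrite lerDl divr_ge0 // ltW.
under eq_bigr do rewrite sqr_Gacc.
apply: le_trans (sum_div_cumsum_le_ln _ _ _) _ => //; first by move=> t; apply: sqr_ge0.
have ln_arg_pos x : 0 <= x -> 1 + x / gamma ^+ 2 \is Num.pos.
  by move=> x_ge0; rewrite posrE ltr_pwDl // divr_ge0 // ltW.
by rewrite ler_ln ?ln_arg_pos // lerD2l ler_pM2r ?invr_gt0.
Qed.
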